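(* Let $\mathcal{H}$ be a complex Hilbert space with $\dim\mathcal{H}>1$. Then the Stone spectrum $\mathcal{Q}(\mathbb{L}(\mathcal{H}))$ is not compact, and if $\dim\mathcal{H}$ is infinite then $\mathcal{Q}(\mathbb{L}(\mathcal{H}))$ is not locally compact.
   Context: $\mathbb{L}(\mathcal{H})$ is the lattice of closed subspaces of $\mathcal{H}$ with $U\wedge V=U\cap V$, $U\vee V=\overline{U+V}$. A quasipoint in a lattice $\mathbb{L}$ with least element $0$ is a maximal (w.r.t. inclusion) subset $\mathfrak{B}\subseteq\mathbb{L}$ such that $\mathfrak{B}\neq\emptyset$, $0\notin\mathfrak{B}$, and for all $a,b\in\mathfrak{B}$ there is $c\in\mathfrak{B}$ with $c\le a\wedge b$. $\mathcal{Q}(\mathbb{L})$ denotes the set of quasipoints; for $a\in\mathbb{L}$ put $\mathcal{Q}_a(\mathbb{L})=\{\mathfrak{B}\in\mathcal{Q}(\mathbb{L}) : a\in\mathfrak{B}\}$. The Stone spectrum is $\mathcal{Q}(\mathbb{L})$ with the topology having the sets $\mathcal{Q}_a(\mathbb{L})$ as a basis. *)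

From Stdlib Require List.
From HB Require Import structures.
From mathcomp Require Import all_boot all_order all_algebra.
From mathcomp Require Import complex.
From mathcomp Require Import reals.

Set Implicit Arguments.
Unset Strict Implicit.
Unset Printing Implicit Defensive.

Import Order.TTheory GRing.Theory Num.Theory.
Local Open Scope ring_scope.

Section Hilbert.
Variables (R : realType) (H : lmodType R[i]).
Variable ip : H -> H -> R[i].

Definition hnorm (x : H) : R := Num.sqrt (complex.Re (ip x x)).

Definition hcauchy (u : nat -> H) : Prop :=
  forall e : R, 0 < e -> exists N : nat, forall m n : nat,
    (N <= m)%N -> (N <= n)%N -> hnorm (u m - u n) < e.

Definition hcvg (u : nat -> H) (x : H) : Prop :=
  forall e : R, 0 < e -> exists N : nat, forall n : nat,
    (N <= n)%N -> hnorm (u n - x) < e.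

Record is_hilbert : Prop := IsHilbert {
  ip_linl : forall (a : R[i]) (x y z : H), ip (a *: x + y) z = a * ip x z + ip y z;
  ip_conj : forall x y : H, ip y x = (ip x y)^*;
  ip_ge0  : forall x : H, 0 <= ip x x;
  ip_def  : forall x : H, ip x x = 0 -> x = 0;
  ip_complete : forall u : nat -> H, hcauchy u -> exists x, hcvg u x
}.

(* linear (Hamel) dimension *)
Definition lin_indep2 (x y : H) : Prop :=
  forall a b : R[i], a *: x + b *: y = 0 -> a = 0 /\ b = 0.

Definition dim_gt1 : Prop := exists x y : H, lin_indep2 x y.

Definition finite_dim : Prop :=
  exists s : seq H, forall x : H, exists c : nat -> R[i],
    x = \sum_(k < size s) c k *: nth 0 s k.

Definition closed_subspace (S : H -> Prop) : Prop :=
  [/\ S 0,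
      forall (a : R[i]) (x y : H), S x -> S y -> S (a *: x + y) &
      forall (u : nat -> H) (x : H), (forall n, S (u n)) -> hcvg u x -> S x].

Definition LH := { S : H -> Prop | closed_subspace S }.

Definition Lle (U V : LH) : Prop := forall x, proj1_sig U x -> proj1_sig V x.

Definition Lzero (U : LH) : Prop := forall x, proj1_sig U x <-> x = 0.

Definition Lle_meet (c a b : LH) : Prop :=
  forall x, proj1_sig c x -> proj1_sig a x /\ proj1_sig b x.

Definition filter_base (B : LH -> Prop) : Prop :=
  [/\ exists a, B a,
      forall a, B a -> ~ Lzero a &
      forall a b, B a -> B b -> exists c, B c /\ Lle_meet c a b].

Definition quasipoint (B : LH -> Prop) : Prop :=
  filter_base B /\
  forall B' : LH -> Prop, filter_base B' -> (forall a, B a -> B' a) ->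
    forall a, B' a -> B a.

Definition QP := { B : LH -> Prop | quasipoint B }.

Definition Qa (a : LH) : QP -> Prop := fun B => proj1_sig B a.

Definition Qopen (O : QP -> Prop) : Prop :=
  forall B, O B -> exists a, Qa a B /\ forall B', Qa a B' -> O B'.

Definition Qcompact (K : QP -> Prop) : Prop :=
  forall (I : Type) (O : I -> QP -> Prop),
    (forall i, Qopen (O i)) ->
    (forall B, K B -> exists i, O i B) ->
    exists s : seq I, forall B, K B -> exists i, List.In i s /\ O i B.

Definition stone_compact : Prop := Qcompact (fun _ => True).

Definition stone_locally_compact : Prop :=
  forall B : QP, exists K : QP -> Prop, Qcompact K /\
    exists O, Qopen O /\ O B /\ forall B', O B' -> K B'.

End Hilbert.

From HB Require Import structures.
From mathcomp Require Import all_boot all_order all_algebra.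
From mathcomp Require Import complex.
From mathcomp Require Import reals.
From Stdlib Require Import Classical.
From mathcomp Require classical_sets.

Set Implicit Arguments.
Unset Strict Implicit.
Unset Printing Implicit Defensive.

Import Order.TTheory GRing.Theory Num.Theory.
Local Open Scope ring_scope.

(* Each nonzero vector w gives the quasipoint of all closed subspaces
   containing w.  Let a contain some w0 <> 0 without lying in the line C w0.
   Every quasipoint contains some b with a not <= b, for otherwise C w0,
   lying below all its members, could be adjoined to it, forcing a <= C w0.
   So the sets Q_b with a not <= b cover the spectrum, but finitely many of
   them never cover Q_a: a vector space over an infinite field is not a
   finite union of proper subspaces, so some w in a lies in none of these b,
   and the quasipoint of w lies in Q_a.  Hence Q_a lies in no compact set;
   a = H gives non-compactness.  In infinite dimension Zorn's lemma gives a
   quasipoint containing the orthogonal complements of all finite sets; each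
   of its members meets every complement of w0 nontrivially, so lies in no
   line C w0, and no basic neighbourhood of that quasipoint is relatively
   compact. *)

Lemma exists_notin (K : numDomainType) (S : seq K) : exists t : K, t \notin S.
Proof.
have [t [t0 ht]] : exists t : K, 0 <= t /\ forall s, s \in S -> `|s| < t.
  elim: S => [|s S [t [t0 ht]]]; first by exists 0; split.
  exists (t + (`|s| + 1)); split; first by rewrite !addr_ge0.
  move=> s'; rewrite in_cons => /orP[/eqP ->|/ht hs'].
    by rewrite addrCA ltrDl ltr_wpDl.
  by rewrite (lt_trans hs') // ltrDl ltr_wpDl.
by exists t; apply/negP => /ht; rewrite ger0_norm // ltxx.
Qed.

Section StoneSpectrum.
Variables (R : realType) (H : lmodType R[i]) (ip : H -> H -> R[i]).
Hypothesis hH : is_hilbert ip.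

Lemma ip0l z : ip 0 z = 0.
Proof.
have := ip_linl hH 1 0 0 z; rewrite scaler0 addr0 mul1r.
by move/(congr1 (fun t => t - ip 0 z)); rewrite addrK subrr.
Qed.

Lemma ipDl x y z : ip (x + y) z = ip x z + ip y z.
Proof. by have := ip_linl hH 1 x y z; rewrite scale1r mul1r. Qed.

Lemma ipZl a x z : ip (a *: x) z = a * ip x z.
Proof. by have := ip_linl hH a x 0 z; rewrite addr0 ip0l addr0. Qed.

Lemma ipBl x y z : ip (x - y) z = ip x z - ip y z.
Proof. by rewrite ipDl -scaleN1r ipZl mulN1r. Qed.

Lemma ip0r z : ip z 0 = 0.
Proof. by rewrite (ip_conj hH) ip0l conjC0. Qed.

Lemma ipDr x y z : ip z (x + y) = ip z x + ip z y.
Proof. by rewrite (ip_conj hH) ipDl rmorphD /= -!(ip_conj hH). Qed.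

Lemma ipZr a x z : ip z (a *: x) = a^* * ip z x.
Proof. by rewrite (ip_conj hH) ipZl rmorphM /= -(ip_conj hH). Qed.

Lemma ip_orth_sym x y : ip x y = 0 -> ip y x = 0.
Proof. by move=> xy; rewrite (ip_conj hH) xy conjC0. Qed.

Lemma ip_pythagoras a x w : ip w x = 0 ->
  ip (a *: x + w) (a *: x + w) = a * a^* * ip x x + ip w w.
Proof.
move=> wx; have xw := ip_orth_sym wx.
by rewrite ipDl !ipDr !ipZl !ipZr wx xw !mulr0 addr0 add0r mulrA.
Qed.

Lemma ipxx_eq0 x : (ip x x == 0) = (x == 0).
Proof. by apply/eqP/eqP => [/(ip_def hH)|->]; last exact: ip0l. Qed.

Lemma hcvg_sqdist_lbound0 (u : nat -> H) y c : hcvg ip u y -> 0 <= c ->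
  (forall n, c <= ip (u n - y) (u n - y)) -> c = 0.
Proof.
move=> uy c0 hc; apply/eqP; apply: contraT => cn0.
have : 0 < c by rewrite lt_def cn0 c0.
rewrite ltcE => /andP[_ Rec_gt0].
have [N hN] : exists N, forall n, (N <= n)%N ->
    hnorm ip (u n - y) < Num.sqrt (complex.Re c) by apply: uy; rewrite sqrtr_gt0.
have := hN N (leqnn N); rewrite /hnorm ltr_sqrt //.
by have := hc N; rewrite lecE => /andP[_]; rewrite leNgt => /negbTE ->.
Qed.

(* Since every [u n] is orthogonal to [s], the component of [u n - y] along
   [s] is that of [- y], so [|u n - y|^2 >= |al|^2 |s|^2] for a fixed [al]
   proportional to [ip y s]. *)
Lemma hcvg_ip_eq0 (u : nat -> H) y s : hcvg ip u y ->
  (forall n, ip (u n) s = 0) -> ip y s = 0.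
Proof.
move=> uy us; have [->|sn0] := eqVneq s 0; first exact: ip0r.
have ss0 : ip s s != 0 by rewrite ipxx_eq0.
set al := - ip y s / ip s s.
have lbound n : al * al^* * ip s s <= ip (u n - y) (u n - y).
  set v := u n - y.
  have -> : v = al *: s + (v - al *: s) by rewrite addrC subrK.
  rewrite ip_pythagoras; last by rewrite ipBl ipZl ipBl us add0r divfK ?subrr.
  by rewrite lerDl ip_ge0.
have := hcvg_sqdist_lbound0 uy _ lbound.
rewrite mulr_ge0 ?mul_conjC_ge0 ?ip_ge0 // => /(_ isT) /eqP.
rewrite mulf_eq0 (negbTE ss0) orbF mul_conjC_eq0 mulf_eq0 invr_eq0.
by rewrite (negbTE ss0) orbF oppr_eq0 => /eqP.
Qed.

Lemma lh0 (b : LH ip) : sval b 0.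
Proof. by case: b => ? []. Qed.

Lemma lhL (b : LH ip) a x y : sval b x -> sval b y -> sval b (a *: x + y).
Proof. by case: b => ? [] /= _ bL _; exact: bL. Qed.

Lemma lhZ (b : LH ip) a x : sval b x -> sval b (a *: x).
Proof. by move=> bx; have := lhL a bx (lh0 b); rewrite addr0. Qed.

Lemma lhB (b : LH ip) x y : sval b x -> sval b y -> sval b (x - y).
Proof. by move=> bx by_; have := lhL (-1) by_ bx; rewrite scaleN1r addrC. Qed.

Lemma nLzero_exists (c : LH ip) : ~ Lzero c -> exists x, sval c x /\ x != 0.
Proof.
move=> nc; apply: NNPP => hno; apply: nc => x; split => [cx|->]; last exact: lh0.
by apply: NNPP => /eqP xn0; apply: hno; exists x.
Qed.

Lemma nLle_exists (a b : LH ip) : ~ Lle a b -> exists x, sval a x /\ ~ sval b x.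
Proof.
move=> nab; apply: NNPP => hno; apply: nab => x ax.
by apply: NNPP => nbx; apply: hno; exists x.
Qed.

Definition perp (S : seq H) (x : H) : Prop := forall s, s \in S -> ip x s = 0.

Lemma perp_closed S : closed_subspace ip (perp S).
Proof.
split.
- by move=> s _; exact: ip0l.
- by move=> a x y px py s sS; rewrite ip_linl // px // py // mulr0 addr0.
- by move=> u x pu ux s sS; apply: (hcvg_ip_eq0 ux) => n; exact: pu.
Qed.

Definition perpL S : LH ip := exist _ (perp S) (perp_closed S).

Definition line (w : H) (x : H) : Prop := exists l, x = l *: w.

Lemma line_closed w : closed_subspace ip (line w).
Proof.
split.
- by exists 0; rewrite scale0r.
- by move=> a x y [l ->] [l' ->]; exists (a * l + l'); rewrite scalerDl scalerA.
- move=> u y uw uy.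
  have [al yw] : exists al, ip (y - al *: w) w = 0.
    have [->|wn0] := eqVneq w 0; first by exists 0; rewrite ip0r.
    exists (ip y w / ip w w); rewrite ipBl ipZl divfK ?subrr //.
    by rewrite ipxx_eq0.
  set z := y - al *: w.
  have wz : ip w z = 0 by exact: ip_orth_sym.
  have yz : ip y z = 0.
    by apply: (hcvg_ip_eq0 uy) => n; have [l ->] := uw n; rewrite ipZl wz mulr0.
  have : ip z z = 0 by rewrite {1}/z ipBl ipZl wz mulr0 subr0.
  by move/(ip_def hH)/eqP; rewrite subr_eq0 => /eqP ->; exists al.
Qed.

Lemma line_self w : line w w.
Proof. by exists 1; rewrite scale1r. Qed.

Definition lineL w : LH ip := exist _ (line w) (line_closed w).

Lemma lineL_le (a : LH ip) w : sval a w -> Lle (lineL w) a.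
Proof. by move=> aw x [l ->]; exact: lhZ. Qed.

Lemma lh_line_nz (c : LH ip) x w : sval c x -> x != 0 -> line w x -> sval c w.
Proof.
move=> cx xn0 [l xw]; have ln0 : l != 0.
  by apply: contraNneq xn0 => l0; rewrite xw l0 scale0r.
by have := lhZ l^-1 cx; rewrite xw scalerA mulVf // scale1r.
Qed.

(* A closed subspace missing [w] contains at most one point of the affine
   line [w + C v]. *)
Lemma lh_avoid_line (w v : H) (l : seq (LH ip)) :
  (forall b, List.In b l -> ~ sval b w) -> forall S : seq R[i],
  exists t, t \notin S /\ forall b, List.In b l -> ~ sval b (w + t *: v).
Proof.
elim: l => [|b l IH] lw S; first by have [t tS] := exists_notin S; exists t.
have {}IH := IH (fun b' b'l => lw b' (or_intror b'l)).
have bw : ~ sval b w by apply: lw; left.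
case: (classic (exists t0, sval b (w + t0 *: v))) => [[t0 bt0]|nbt]; last first.
  have [t [tS tl]] := IH S; exists t; split => // b' /= [<- bt|]; last exact: tl.
  by apply: nbt; exists t.
have [t [/norP[tt0 tS] tl]] := IH (t0 :: S); exists t; split => //.
move=> b' /= [<- bt|]; last exact: tl.
have bv : sval b v.
  have := lhB bt bt0; rewrite opprD addrACA subrr add0r -scalerBl.
  by move/(lhZ (t - t0)^-1); rewrite scalerA mulVf ?scale1r // subr_eq0.
by apply: bw; have := lhB bt (lhZ t bv); rewrite addrK.
Qed.

Lemma lh_avoid (a : LH ip) (l : seq (LH ip)) :
  (forall b, List.In b l -> ~ Lle a b) ->
  exists w, sval a w /\ forall b, List.In b l -> ~ sval b w.
Proof.
elim: l => [|b l IH] al; first by exists 0; split; [exact: lh0|].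
have [w [aw lw]] := IH (fun b' b'l => al b' (or_intror b'l)).
case: (classic (sval b w)) => bw; last first.
  by exists w; split => // b' /= [<-|]; last exact: lw.
have [v [av bv]] := nLle_exists (al b (or_introl erefl)).
have [t [/norP[tn0 _] tl]] := lh_avoid_line v lw [:: 0].
exists (w + t *: v); split; first by rewrite addrC; exact: lhL.
move=> b' /= [<- bt|]; last exact: tl.
apply: bv; have := lhB bt bw; rewrite addrC addKr => /(lhZ t^-1).
by rewrite scalerA mulVf ?scale1r.
Qed.

Definition span (S : seq H) (p : H) : Prop :=
  exists c : nat -> R[i], p = \sum_(k < size S) c k *: nth 0 S k.

Lemma span0 S : span S 0.
Proof. by exists (fun _ => 0); rewrite big1 // => k _; rewrite scale0r. Qed.

Lemma span_lin S a x y : span S x -> span S y -> span S (a *: x + y).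
Proof.
move=> [cx ->] [cy ->]; exists (fun k => a * cx k + cy k).
rewrite scaler_sumr -big_split; apply: eq_bigr => k _.
by rewrite scalerDl scalerA.
Qed.

Lemma span_cons s S x : span S x -> span (s :: S) x.
Proof.
move=> [c ->]; exists (fun k => if k is k'.+1 then c k' else 0).
by rewrite /= big_ord_recl /= scale0r add0r.
Qed.

Lemma span_head s S : span (s :: S) s.
Proof.
exists (fun k => if k is 0 then 1 else 0).
by rewrite /= big_ord_recl /= scale1r big1 ?addr0 // => k _; exact: scale0r.
Qed.

Lemma perp_span S r p : perp S r -> span S p -> ip p r = 0.
Proof.
move=> Sr [c ->]; apply: (big_ind (fun v => ip v r = 0)).
- exact: ip0l.
- by move=> x y xr yr; rewrite ipDl xr yr addr0.
- by move=> k _; rewrite ipZl ip_orth_sym ?mulr0 // Sr // mem_nth.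
Qed.

(* One Gram-Schmidt step: with [s = ps + rs], remove from the residual [rx]
   of [x] its component along [rs]. *)
Lemma orth_decomp S x : exists p r, [/\ x = p + r, span S p & perp S r].
Proof.
elim: S x => [|s S IH] x; first by exists 0, x; rewrite add0r; split; [|exact: span0|].
have [ps [rs [es Sps Srs]]] := IH s; have [px [rx [ex Spx Srx]]] := IH x.
have [rs0|rsn0] := eqVneq rs 0.
  exists px, rx; split => //; first exact: span_cons.
  move=> s'; rewrite in_cons => /orP[/eqP ->|]; last exact: Srx.
  by rewrite es rs0 addr0 ip_orth_sym // (perp_span Srx Sps).
have rsrs : ip rs rs != 0 by rewrite ipxx_eq0.
set mu := ip rx rs / ip rs rs.
have Sr : perp S (rx - mu *: rs).
  by move=> s' s'S; rewrite ipBl ipZl Srx // Srs // mulr0 subr0.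
exists (px + mu *: rs), (rx - mu *: rs); split.
- by rewrite ex addrACA subrr addr0.
- rewrite addrC; apply: span_lin; last exact: span_cons.
  have -> : rs = (-1) *: ps + s by rewrite scaleN1r es addKr.
  by apply: span_lin; [exact: span_cons|exact: span_head].
- move=> s'; rewrite in_cons => /orP[/eqP ->|]; last exact: Sr.
  rewrite es ipDr ip_orth_sym ?(perp_span Sr Sps) // add0r.
  by rewrite ipBl ipZl /mu divfK // subrr.
Qed.

Lemma perp_nonzero S : ~ finite_dim H -> exists x, x != 0 /\ perp S x.
Proof.
move=> ninf; apply: NNPP => hno; apply: ninf; exists S => x.
have [p [r [-> [c ->] Sr]]] := orth_decomp S x.
suff -> : r = 0 by exists c; rewrite addr0.
by apply: NNPP => /eqP rn0; apply: hno; exists r.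
Qed.

Definition principal (w : H) : LH ip -> Prop := fun b => sval b w.

Lemma quasipoint_lower_bound (B : LH ip -> Prop) (c : LH ip) : quasipoint B ->
  ~ Lzero c -> (forall b, B b -> Lle c b) -> B c.
Proof.
move=> [[_ nzB dirB] maxB] nzc cB.
apply: (maxB (fun b => B b \/ b = c)); last by right.
- split; first by exists c; right.
  + by move=> b [/nzB|->].
  + move=> b1 b2 [B1|->] [B2|->].
    * by have [d [Bd d12]] := dirB _ _ B1 B2; exists d; split; first left.
    * by exists c; split; [right | move=> x cx; split => //; exact: cB].
    * by exists c; split; [right | move=> x cx; split => //; exact: cB].
    * by exists c; split; [right|].
- by move=> b Bb; left.
Qed.

Lemma lineL_neq0 w : w != 0 -> ~ Lzero (lineL w).
Proof.
move=> wn0 /(_ w) [/(_ (line_self w)) /eqP].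
by rewrite (negbTE wn0).
Qed.

Lemma principal_quasipoint w : w != 0 -> quasipoint (principal w).
Proof.
move=> wn0; split.
  split; first by exists (lineL w); exact: line_self.
  - by move=> a aw /(_ w) [/(_ aw) /eqP]; rewrite (negbTE wn0).
  - move=> a b aw bw; exists (lineL w); split; first exact: line_self.
    by move=> x xw; split; [exact (lineL_le aw xw)|exact (lineL_le bw xw)].
move=> B' [_ nzB' dirB'] wB' a aB'.
have [c [B'c ca]] := dirB' _ _ aB' (wB' (lineL w) (line_self w)).
have [x [cx xn0]] := nLzero_exists (nzB' _ B'c).
by have [] := ca _ (lh_line_nz cx xn0 (proj2 (ca x cx))).
Qed.

Lemma quasipoint_not_all_above (B : QP ip) (a : LH ip) w0 :
  w0 != 0 -> sval a w0 -> ~ Lle a (lineL w0) ->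
  exists b, sval B b /\ ~ Lle a b.
Proof.
move=> w0n0 aw0 nal; apply: NNPP => hno; apply: nal.
have aB b : sval B b -> Lle a b.
  by move=> Bb; apply: NNPP => nab; apply: hno; exists b.
have lineB : sval B (lineL w0).
  apply: quasipoint_lower_bound (svalP B) (lineL_neq0 w0n0) _ => b Bb x xw.
  exact (aB b Bb x (lineL_le aw0 xw)).
exact: aB _ lineB.
Qed.

Lemma Qa_not_in_compact (a : LH ip) w0 (K : QP ip -> Prop) :
  w0 != 0 -> sval a w0 -> ~ Lle a (lineL w0) -> Qcompact K ->
  ~ (forall B, Qa a B -> K B).
Proof.
move=> w0n0 aw0 nal cK aK.
pose I := {b : LH ip | ~ Lle a b}.
have [s scov] : exists s : seq I, forall B, K B ->
    exists i, List.In i s /\ Qa (sval i) B.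
  apply: (cK I (fun i => Qa (sval i))) => [i B Bi|B _]; first by exists (sval i).
  have [b [Bb nab]] := quasipoint_not_all_above B w0n0 aw0 nal.
  by exists (exist _ b nab).
have [w [aw wl]] : exists w, sval a w /\
    forall b, List.In b (lineL 0 :: List.map sval s) -> ~ sval b w.
  apply: lh_avoid => b /= [<-|/List.in_map_iff [i [<- _]]]; last exact: (svalP i).
  by move=> /(_ w0 aw0) [l]; rewrite scaler0 => /eqP; rewrite (negbTE w0n0).
have wn0 : w != 0.
  by apply/eqP => w0'; apply: (wl (lineL 0)); [left | exists 0; rewrite scaler0].
have [i [si wi]] := scov _ (aK (exist _ _ (principal_quasipoint wn0)) aw).
by apply: (wl (sval i)) wi; right; apply: List.in_map.
Qed.

Lemma quasipoint_perp_not_line (B : LH ip -> Prop) (a : LH ip) w :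
  quasipoint B -> B (perpL [:: w]) -> B a -> ~ Lle a (lineL w).
Proof.
move=> [[_ nzB dirB] _] Bw Ba al.
have [c [Bc ca]] := dirB _ _ Ba Bw.
have [z [cz zn0]] := nLzero_exists (nzB c Bc).
have zw := al _ (proj1 (ca z cz)).
have /(ip_def hH) w0 := proj2 (ca _ (lh_line_nz cz zn0 zw)) w (mem_head _ _).
by case: zw zn0 => l ->; rewrite w0 scaler0 eqxx.
Qed.

Lemma filter_base_chain_union (F : LH ip -> Prop)
    (C : (LH ip -> Prop) -> Prop) : filter_base F ->
  (forall X, C X -> filter_base (fun b => X b \/ F b)) ->
  classical_sets.total_on C (@classical_sets.subset _) ->
  filter_base (fun b => classical_sets.bigcup C id b \/ F b).
Proof.
move=> [[b0 Fb0] nzF dirF] CF totC; split; first by exists b0; right.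
  move=> a [[X CX Xa]|/nzF //].
  by have [_ nzX _] := CF X CX; apply: nzX; left.
have lift X : C X -> forall b, X b \/ F b ->
    classical_sets.bigcup C id b \/ F b.
  by move=> CX b [Xb|Fb]; [left; exists X|right].
have dirX X : C X -> forall a b, X a \/ F a -> X b \/ F b ->
    exists c, (classical_sets.bigcup C id c \/ F c) /\ Lle_meet c a b.
  move=> CX a b Xa Xb; have [_ _ d] := CF X CX.
  by have [c [Xc cab]] := d a b Xa Xb; exists c; split => //; exact: lift Xc.
move=> a b [[X CX Xa]|Fa] [[Y CY Yb]|Fb].
- have [XY|YX] := totC X Y CX CY.
  + exact: dirX Y CY a b (or_introl (XY _ Xa)) (or_introl Yb).
  + exact: dirX X CX a b (or_introl Xa) (or_introl (YX _ Yb)).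
- exact: dirX X CX a b (or_introl Xa) (or_intror Fb).
- exact: dirX Y CY a b (or_intror Fa) (or_introl Yb).
- by have [c [Fc cab]] := dirF a b Fa Fb; exists c; split => //; right.
Qed.

Lemma filter_base_quasipoint (F : LH ip -> Prop) : filter_base F ->
  exists B, quasipoint B /\ forall b, F b -> B b.
Proof.
move=> fbF.
(* Zorn runs over the families X such that X \/ F is a filter base, which
   makes the union of the empty chain harmless. *)
pose P X := filter_base (fun b : LH ip => X b \/ F b).
have [A [PA maxA]] := classical_sets.Zorn_bigcup
  (fun C CP totC => filter_base_chain_union fbF CP totC : P _).
exists (fun b => A b \/ F b); split; last by move=> b Fb; right.
split => // B' [[b0 B'b0] nzB' dirB'] AB' a B'a.
apply: NNPP => nAa; apply: (maxA B').
  by split => [x Ax|/(_ a B'a) Aa]; [apply: AB'; left | apply: nAa; left].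
have B'F b : B' b \/ F b -> B' b by case=> // Fb; apply: AB'; right.
split; first by exists b0; left.
- by move=> b /B'F /nzB'.
- move=> b1 b2 /B'F B'1 /B'F B'2; have [c [B'c c12]] := dirB' _ _ B'1 B'2.
  by exists c; split => //; left.
Qed.

Lemma filter_base_perp : ~ finite_dim H ->
  filter_base (fun b => exists S, b = perpL S).
Proof.
move=> ninf; split; first by exists (perpL [::]), [::].
- move=> a [S ->] zS; have [x [xn0 Sx]] := perp_nonzero S ninf.
  by move: xn0; have [/(_ Sx) -> _] := zS x; rewrite eqxx.
- move=> a b [S ->] [T ->]; exists (perpL (S ++ T)); split; first by exists (S ++ T).
  by move=> x STx; split => s sS; apply: STx; rewrite mem_cat sS ?orbT.
Qed.

Definition topL : LH ip.
Proof. by exists (fun _ => True); split. Defined.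

End StoneSpectrum.

Theorem proposition3p51 (R : realType) (H : lmodType R[i]) (ip : H -> H -> R[i]) :
  is_hilbert ip -> dim_gt1 H ->
  ~ stone_compact ip /\ (~ finite_dim H -> ~ stone_locally_compact ip).
Proof.
move=> hH [x [y xy]].
have xn0 : x != 0.
  apply/eqP => x0; case: (xy 1 0) => [|/eqP]; last by rewrite oner_eq0.
  by rewrite x0 scaler0 scale0r addr0.
split.
  move=> cH; apply: (Qa_not_in_compact (hH := hH) (a := topL ip)
    (K := fun _ => True) xn0 I _ cH) => //.
  move=> /(_ y I) [l yx]; case: (xy l (-1)) => [|_ /eqP].
    by rewrite scaleN1r -yx subrr.
  by rewrite oppr_eq0 oner_eq0.
move=> ninf lcH.
have [B [qB perpB]] := filter_base_quasipoint (filter_base_perp hH ninf).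
have [K [cK [O [oO [OB OK]]]]] := lcH (exist _ B qB).
have [a [Ba aO]] := oO _ OB.
have [[_ nzB _] _] := qB.
have [w0 [aw0 w0n0]] := nLzero_exists (nzB a Ba).
have nal := quasipoint_perp_not_line qB (perpB _ (ex_intro _ [:: w0] erefl)) Ba.
by apply: (Qa_not_in_compact w0n0 aw0 nal cK) => B' /aO /OK.
Qed.
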